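(* The graph parameters $\widetilde{\Delta}$, $\mathsf{cdeg}$, $\max\{\mathsf{cideg},\widetilde{\omega}\}$, $\max\{\alpha^{\ast},\widetilde{\omega}\}$ and $\max\{\theta^{\ast},\widetilde{\omega}\}$ are pairwise equivalent, i.e. for any two $p,q$ of them there is a function $g\colon\mathbb{N}\to\mathbb{N}$ with $q(G)\le g(p(G))$ for every finite graph $G$.
   Context: Two vertices are equivalent if they lie in exactly the same maximal cliques. $\widetilde{G}$ is the clique-quotient graph (equivalence classes as vertices, adjacency inherited from representatives) and $\widetilde{\Delta}(G)$ its maximum degree. $\widetilde{\omega}(G)$ is the maximum over maximal cliques $K$ of the number of equivalence classes meeting $K$; $\mathsf{cideg}(G)$ is the maximum over vertices of the number of maximal cliques containing it; $\mathsf{cdeg}(G)$ is the maximum over maximal cliques $K$ of the number of other maximal cliques intersecting $K$. $\alpha^{\ast}(G)=\max_v\alpha(G[N[v]])$, $\theta^{\ast}(G)=\max_v\theta(G[N[v]])$ with $\theta$ the clique-cover number. *)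

(* A finite simple graph is a finite type T of vertices with a
   symmetric irreflexive adjacency relation e : rel T. *)
From Stdlib Require List.
From mathcomp Require Import all_boot.
Set Implicit Arguments. Unset Strict Implicit. Unset Printing Implicit Defensive.

Section GraphParams.
Variables (T : finType) (e : rel T).

Definition is_clique (A : {set T}) : bool :=
  [forall x in A, forall y in A, (x != y) ==> e x y].

Definition is_maxclique (A : {set T}) : bool :=
  is_clique A && [forall B : {set T}, (is_clique B && (A \subset B)) ==> (B == A)].

Definition maxcliques : {set {set T}} := [set A | is_maxclique A].

Definition cliques_of (v : T) : {set {set T}} := [set K in maxcliques | v \in K].

Definition cequiv (u v : T) : bool := cliques_of u == cliques_of v.

Definition cclass (v : T) : {set T} := [set u | cequiv u v].

(* Vertices of the clique-quotient graph: the equivalence classes. *)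
Definition cclasses : {set {set T}} := [set cclass v | v in T].

(* Adjacency in the clique-quotient graph, inherited from representatives. *)
Definition qadj (C D : {set T}) : bool :=
  (C != D) && [exists u in C, exists w in D, e u w].

Definition Delta_tilde : nat :=
  \max_(C in cclasses) #|[set D in cclasses | qadj C D]|.

Definition omega_tilde : nat :=
  \max_(K in maxcliques) #|[set C in cclasses | C :&: K != set0]|.

Definition cideg : nat := \max_(v : T) #|cliques_of v|.

Definition cdeg : nat :=
  \max_(K in maxcliques) #|[set K' in maxcliques | (K' != K) && (K' :&: K != set0)]|.

Definition closed_nbhd (v : T) : {set T} := v |: [set w | e v w].

Definition is_indep (S : {set T}) : bool :=
  [forall x in S, forall y in S, ~~ e x y].

Definition alpha_in (A : {set T}) : nat :=
  \max_(S : {set T} | (S \subset A) && is_indep S) #|S|.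

Definition is_clique_cover (A : {set T}) (P : {set {set T}}) : bool :=
  [forall B in P, is_clique B && (B \subset A)] && (cover P == A).

(* Clique-cover number of G[A]: minimum size of a clique cover
   (#|A| is always attained by singletons, so it is a valid default). *)
Definition theta_in (A : {set T}) : nat :=
  \big[minn/#|A|]_(P : {set {set T}} | is_clique_cover A P) #|P|.

Definition alpha_star : nat := \max_(v : T) alpha_in (closed_nbhd v).
Definition theta_star : nat := \max_(v : T) theta_in (closed_nbhd v).

End GraphParams.

Definition graph_param := forall T : finType, rel T -> nat.

Definition param_bounded_by (p q : graph_param) : Prop :=
  exists g : nat -> nat, forall (T : finType) (e : rel T),
    symmetric e -> irreflexive e -> q T e <= g (p T e).

Definition cor54_params : seq graph_param :=
  [:: (fun T e => @Delta_tilde T e);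
      (fun T e => @cdeg T e);
      (fun T e => maxn (@cideg T e) (@omega_tilde T e));
      (fun T e => maxn (@alpha_star T e) (@omega_tilde T e));
      (fun T e => maxn (@theta_star T e) (@omega_tilde T e)) ].

From mathcomp Require Import all_boot all_order zify.
From Stdlib Require List.

Set Implicit Arguments.
Unset Strict Implicit.
Unset Printing Implicit Defensive.

Import Order.TTheory.

(* Every parameter is tied to [nbhd_classes], the largest number of
   equivalence classes meeting a closed neighbourhood N[v], which is one more
   than the maximum degree of the clique-quotient graph.  Equivalent vertices
   have the same closed neighbourhood, N[v] is the union of the maximal cliques
   through v, and a maximal clique is determined by the classes it meets; this
   yields the bounds between the quotient degree, cideg, cdeg and omega~.
   A clique cover of N[v] bounds its independent sets, so
   alpha* <= theta* <= cideg.  The one Ramsey-type step bounds the number of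
   classes in N[v] by alpha* and omega~: among representatives of these
   classes, a large clique meets too many classes of a single maximal clique,
   and a large independent set contradicts alpha*. *)

Lemma card_bigcup_leq (I T : finType) (A : {set I}) (F : I -> {set T}) m :
  {in A, forall i, #|F i| <= m} -> #|\bigcup_(i in A) F i| <= #|A| * m.
Proof.
move=> leFm; rewrite -sum_nat_const.
elim/big_rec2: _ => [|i n U iA leUn]; first by rewrite cards0.
by rewrite (leq_trans (leq_card_setU _ _)) // leq_add ?leFm.
Qed.

Lemma imset_transversal (aT rT : finType) (f : aT -> rT) (A : {set aT}) :
  exists2 R : {set aT}, R \subset A & {in R &, injective f} /\ #|R| = #|f @: A|.
Proof.
have [->|[x0 x0A]] := set_0Vmem A.
  exists set0; rewrite ?sub0set //.
  by split=> [x y|]; rewrite ?imset0 ?inE ?cards0.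
pose g y := odflt x0 [pick x in A | f x == y].
have gK : {in f @: A, forall y, g y \in A /\ f (g y) = y}.
  move=> _ /imsetP[x xA ->]; rewrite /g.
  by case: pickP => [x' /andP[x'A /eqP]|/(_ x)] //; rewrite xA eqxx.
have g_inj : {in f @: A &, injective g}.
  by move=> y z /gK[_ fgy] /gK[_ fgz] gyz; rewrite -fgy -fgz gyz.
exists (g @: (f @: A)); first by apply/subsetP => _ /imsetP[y /gK[]] ? _ ->.
split; last by rewrite card_in_imset.
move=> _ _ /imsetP[y /gK[_ fgy] ->] /imsetP[z /gK[_ fgz] ->].
by rewrite fgy fgz => ->.
Qed.

Lemma param_bounded_by_trans (p r q : graph_param) :
  param_bounded_by p r -> param_bounded_by r q -> param_bounded_by p q.
Proof.
move=> [g1 rg1] [g2 qg2].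
(* [g2] need not be monotone, so it is replaced by its running maximum. *)
exists (fun n => \max_(m < (g1 n).+1) g2 m) => T e esym eirr.
apply: leq_trans (qg2 T e esym eirr) _.
apply: (leq_bigmax (F := fun m : 'I_(g1 (p T e)).+1 => g2 m) (Ordinal _)).
by rewrite ltnS rg1.
Qed.

Section Cliques.
Variables (T : finType) (e : rel T).
Hypotheses (esym : symmetric e) (eirr : irreflexive e).

Lemma cliqueP (A : {set T}) :
  reflect {in A &, forall x y, x != y -> e x y} (is_clique e A).
Proof.
apply: (iffP forall_inP) => [cliqA x y xA yA|cliqA x xA].
  by have /forall_inP/(_ y yA)/implyP := cliqA x xA.
by apply/forall_inP => y yA; apply/implyP/cliqA.
Qed.

Lemma indepP (A : {set T}) :
  reflect {in A &, forall x y, ~~ e x y} (is_indep e A).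
Proof.
apply: (iffP forall_inP) => [indA x y xA|indA x xA].
  by have /forall_inP := indA x xA; apply.
by apply/forall_inP => y; apply: indA.
Qed.

Lemma clique_setU1 x (A : {set T}) :
  {in A, forall y, e x y} -> is_clique e A -> is_clique e (x |: A).
Proof.
move=> exA /cliqueP cliqA; apply/cliqueP => y z.
case/setU1P=> [->|yA] /setU1P[->|zA]; rewrite ?eqxx //.
- by move=> _; apply: exA.
- by move=> _; rewrite esym exA.
- exact: cliqA.
Qed.

Lemma indep_setU1 x (A : {set T}) :
  {in A, forall y, ~~ e x y} -> is_indep e A -> is_indep e (x |: A).
Proof.
move=> exA /indepP indA; apply/indepP => y z.
case/setU1P=> [->|yA] /setU1P[->|zA].
- by rewrite eirr.
- exact: exA.
- by rewrite esym exA.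
- exact: indA.
Qed.

Lemma ramsey s t (A : {set T}) : 2 ^ (s + t) <= #|A| ->
  (exists B : {set T}, [/\ B \subset A, #|B| = s & is_clique e B]) \/
  (exists B : {set T}, [/\ B \subset A, #|B| = t & is_indep e B]).
Proof.
elim: s t A => [|s IHs] t A.
  left; exists set0; rewrite sub0set cards0.
  by split=> //; apply/cliqueP => x; rewrite inE.
elim: t A => [|t IHt] A.
  right; exists set0; rewrite sub0set cards0.
  by split=> //; apply/indepP => x; rewrite inE.
move=> leA; have [x xA] : exists x, x \in A.
  by apply/set0Pn; rewrite -card_gt0 (leq_trans _ leA) // expn_gt0.
set Nx := (A :\ x) :&: [set y | e x y]; set Mx := (A :\ x) :\: [set y | e x y].
have extend (B : {set T}) :
    B \subset A :\ x -> x |: B \subset A /\ #|x |: B| = #|B|.+1.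
  move=> BA; have xB : x \notin B.
    by apply: contraT => /negPn/(subsetP BA); rewrite setD11.
  split; last by rewrite cardsU1 xB.
  by rewrite subUset sub1set xA (subset_trans BA) ?subD1set.
have [leN|leM] : 2 ^ (s + t.+1) <= #|Nx| \/ 2 ^ (s.+1 + t) <= #|Mx|.
  move: leA; rewrite (cardsD1 x A) xA -(cardsID [set y | e x y]) -/Nx -/Mx.
  rewrite !addnS !addSn expnS; set k := 2 ^ _; lia.
- have [[B [BN <- cliqB]]|[B [BN <- indB]]] := IHs t.+1 Nx leN.
  + have [xBA cardxB] := extend B (subset_trans BN (subsetIl _ _)).
    left; exists (x |: B); split=> //; apply: clique_setU1 cliqB.
    by move=> y /(subsetP BN); rewrite !inE => /andP[].
  + right; exists B; split=> //.
    by rewrite (subset_trans BN) // subIset ?subD1set.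
- have [[B [BM <- cliqB]]|[B [BM <- indB]]] := IHt Mx leM.
  + left; exists B; split=> //.
    by rewrite (subset_trans BM) // subDset subsetU ?subD1set ?orbT.
  + have [xBA cardxB] := extend B (subset_trans BM (subsetDl _ _)).
    right; exists (x |: B); split=> //; apply: indep_setU1 indB.
    by move=> y /(subsetP BM); rewrite !inE => /andP[].
Qed.

Lemma indep_leq_clique_cover (A S : {set T}) P :
  is_clique_cover e A P -> S \subset A -> is_indep e S -> #|S| <= #|P|.
Proof.
case/andP=> /forall_inP coverP /eqP <- /subsetP SA /indepP indS.
apply: leq_trans (_ : #|\bigcup_(B in P) (S :&: B)| <= _).
  apply/subset_leq_card/subsetP => s sS; have /bigcupP[B BP sB] := SA s sS.
  by apply/bigcupP; exists B; rewrite ?inE ?sS.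
rewrite -[#|P|]muln1; apply: card_bigcup_leq => B /coverP/andP[/cliqueP cliqB _].
apply/card_le1_eqP => x y /setIP[xS xB] /setIP[yS yB].
by apply: contraTeq (indS y x yS xS) => neq_yx; rewrite negbK cliqB.
Qed.

Lemma alpha_in_leq_theta_in (A : {set T}) : alpha_in e A <= theta_in e A.
Proof.
apply/bigmax_leqP => S /andP[SA indS]; rewrite /theta_in.
elim/big_ind: _ => [|m n leSm leSn|P coverP]; first exact: subset_leq_card.
  by rewrite leq_min leSm.
exact: indep_leq_clique_cover coverP SA indS.
Qed.

End Cliques.

Section CliqueQuotient.
Variables (T : finType) (e : rel T).
Hypotheses (esym : symmetric e) (eirr : irreflexive e).

Local Notation MC := (maxcliques e).
Local Notation cl := (cliques_of e).
Local Notation N := (closed_nbhd e).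
Local Notation cc := (cclass e).

Lemma in_cliques_of K v : (K \in cl v) = (K \in MC) && (v \in K).
Proof. by rewrite inE. Qed.

Lemma maxclique_clique K : K \in MC -> is_clique e K.
Proof. by rewrite inE => /andP[]. Qed.

Lemma clique_maxclique_sup (A : {set T}) :
  is_clique e A -> exists2 K, K \in MC & A \subset K.
Proof.
move=> cliqA; pose P B := is_clique e B && (A \subset B).
have PA : P A by rewrite /P cliqA subxx.
case: (@arg_maxnP _ A P (fun B => #|B|) PA).
move=> K /andP[cliqK AK] maxK; exists K => //.
rewrite inE /is_maxclique cliqK; apply/forall_inP => B /andP[cliqB KB].
by rewrite eq_sym eqEcard KB; apply: maxK; rewrite /P cliqB (subset_trans AK KB).
Qed.

Lemma closed_nbhd_clique v u : u \in N v -> is_clique e [set v; u].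
Proof.
move=> uNv; apply/cliqueP => x y; rewrite !inE.
case/orP=> /eqP-> /orP[]/eqP->; rewrite ?eqxx // => neq; move: uNv; rewrite !inE.
- by rewrite eq_sym (negPf neq).
- by rewrite (negPf neq) esym.
Qed.

Lemma closed_nbhdP v u : reflect (exists2 K, K \in cl v & u \in K) (u \in N v).
Proof.
apply: (iffP idP) => [uNv|[K]].
  have [K KMC /subsetP vuK] := clique_maxclique_sup (closed_nbhd_clique uNv).
  exists K; [rewrite in_cliques_of KMC /= |];
    by apply: vuK; rewrite !inE eqxx ?orbT.
rewrite in_cliques_of => /andP[KMC vK] uK; rewrite !inE.
have [//|neq_uv] := eqVneq u v.
by apply: (cliqueP _ _ (maxclique_clique KMC)); rewrite // eq_sym.
Qed.

Lemma maxclique_sub_closed_nbhd K v : K \in cl v -> K \subset N v.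
Proof. by move=> Kv; apply/subsetP => u uK; apply/closed_nbhdP; exists K. Qed.

Lemma mem_cclass u v : (u \in cc v) = (cl u == cl v).
Proof. by rewrite inE. Qed.

Lemma cclass_refl v : v \in cc v.
Proof. by rewrite mem_cclass. Qed.

Lemma cclassP u v : reflect (cl u = cl v) (cc u == cc v).
Proof.
apply: (iffP eqP) => [ccuv|cluv].
  by apply/eqP; rewrite -mem_cclass -ccuv cclass_refl.
by apply/setP => x; rewrite !mem_cclass cluv.
Qed.

Lemma cclass_mem u v : u \in cc v -> cc u = cc v.
Proof. by rewrite mem_cclass => /eqP/cclassP/eqP. Qed.

Lemma closed_nbhd_cequiv u v : cl u = cl v -> N u = N v.
Proof.
by move=> cluv; apply/setP => x; apply/closed_nbhdP/closed_nbhdP; rewrite cluv.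
Qed.

Lemma card_cclass_imset (A : {set T}) : #|cc @: A| = #|cl @: A|.
Proof.
have -> : cc @: A = (fun S => [set u | cl u == S]) @: (cl @: A).
  by rewrite -imset_comp.
rewrite card_in_imset // => _ _ /imsetP[x _ ->] /imsetP[y _ ->] eq_xy.
by have := cclass_refl x; rewrite [cc x]eq_xy inE => /eqP.
Qed.

Lemma omega_tildeE : omega_tilde e = \max_(K in MC) #|cc @: K|.
Proof.
apply: eq_bigr => K _; apply: eq_card => C; rewrite inE.
apply/andP/imsetP => [[/imsetP[v _ ->] /set0Pn[u /setIP[uv uK]]]|[u uK ->]].
  by exists u; rewrite ?(cclass_mem uv).
by split; [apply: imset_f | apply/set0Pn; exists u; rewrite inE cclass_refl].
Qed.

Lemma card_cclass_maxclique K : K \in MC -> #|cc @: K| <= omega_tilde e.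
Proof.
move=> KMC; rewrite omega_tildeE.
exact: (leq_bigmax_cond (F := fun K : {set T} => #|cc @: K|) _ KMC).
Qed.

Lemma maxclique_cclass_saturated K (A : {set T}) :
  K \in MC -> cc @: A \subset cc @: K -> A \subset K.
Proof.
move=> KMC /subsetP ccAK; apply/subsetP => x xA.
have /imsetP[y yK ccxy] := ccAK _ (imset_f cc xA).
have clxy : cl x = cl y by apply/cclassP/eqP.
have : (K \in cl x) = (K \in cl y) by rewrite clxy.
by rewrite !in_cliques_of KMC yK.
Qed.

Definition nbhd_classes : nat := \max_v #|cc @: N v|.

Lemma card_nbhd_classes_leq v : #|cc @: N v| <= nbhd_classes.
Proof. exact: (leq_bigmax (F := fun v => #|cc @: N v|)). Qed.

Lemma Delta_tilde_leq_nbhd_classes : Delta_tilde e <= nbhd_classes.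
Proof.
apply/bigmax_leqP => _ /imsetP[v _ ->].
apply: leq_trans (card_nbhd_classes_leq v).
apply/subset_leq_card/subsetP => D; rewrite inE => /andP[/imsetP[y _ ->]].
case/andP=> _ /exists_inP[a av /exists_inP[b by_ eab]].
have clav : cl a = cl v by apply/eqP; rewrite -mem_cclass.
by rewrite -(cclass_mem by_) imset_f // -(closed_nbhd_cequiv clav) !inE eab orbT.
Qed.

Lemma nbhd_classes_leq_Delta_tilde : nbhd_classes <= (Delta_tilde e).+1.
Proof.
apply/bigmax_leqP => v _; pose nbrs C := [set D in cclasses e | qadj e C D].
have ccv : cc v \in cclasses e by apply: imset_f.
apply: leq_trans (_ : #|cc v |: nbrs (cc v)| <= _).
  apply/subset_leq_card/subsetP => _ /imsetP[u uNv ->]; rewrite in_setU1.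
  have [//|neq_uv] := eqVneq (cc u) (cc v).
  rewrite inE /qadj eq_sym neq_uv imset_f //=; apply/exists_inP; exists v => //.
    exact: cclass_refl.
  apply/exists_inP; exists u; first exact: cclass_refl.
  by move: uNv neq_uv; rewrite !inE => /orP[/eqP->|]; rewrite ?eqxx.
rewrite cardsU1 -add1n leq_add ?leq_b1 //.
exact: (leq_bigmax_cond (F := fun C => #|nbrs C|) _ ccv).
Qed.

Lemma omega_tilde_leq_nbhd_classes : omega_tilde e <= nbhd_classes.
Proof.
rewrite omega_tildeE; apply/bigmax_leqP => K KMC.
have [->|[v vK]] := set_0Vmem K; first by rewrite imset0 cards0.
apply: leq_trans (card_nbhd_classes_leq v); apply/subset_leq_card/imsetS.
by apply: maxclique_sub_closed_nbhd; rewrite in_cliques_of KMC.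
Qed.

Lemma nbhd_classes_leq_cideg_omega : nbhd_classes <= cideg e * omega_tilde e.
Proof.
apply/bigmax_leqP => v _.
apply: leq_trans (_ : #|\bigcup_(K in cl v) cc @: K| <= _).
  apply/subset_leq_card/subsetP => _ /imsetP[u /closed_nbhdP[K Kv uK] ->].
  by apply/bigcupP; exists K; rewrite ?imset_f.
apply: leq_trans (card_bigcup_leq (m := omega_tilde e) _) _.
  by move=> K; rewrite in_cliques_of => /andP[/card_cclass_maxclique].
by rewrite leq_mul2r (leq_bigmax (F := fun v => #|cl v|)) orbT.
Qed.

Lemma cideg_leq_exp_nbhd_classes : cideg e <= 2 ^ nbhd_classes.
Proof.
apply/bigmax_leqP => v _.
have ccK_inj : {in cl v &, injective (fun K : {set T} => cc @: K)}.
  move=> K1 K2; rewrite !in_cliques_of => /andP[K1MC _] /andP[K2MC _] eqK12.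
  by apply/eqP; rewrite eqEsubset !maxclique_cclass_saturated ?eqK12.
rewrite -(card_in_imset ccK_inj).
apply: leq_trans (_ : #|powerset (cc @: N v)| <= _).
  apply/subset_leq_card/subsetP => _ /imsetP[K Kv ->].
  by rewrite powersetE imsetS // maxclique_sub_closed_nbhd.
by rewrite card_powerset leq_pexp2l // card_nbhd_classes_leq.
Qed.

Definition clique_nbhd K : {set {set T}} :=
  [set K' in MC | (K' != K) && (K' :&: K != set0)].

Lemma card_clique_nbhd_setU1 K :
  K \in MC -> #|K |: clique_nbhd K| <= (cdeg e).+1.
Proof.
move=> KMC; rewrite cardsU1 -add1n leq_add ?leq_b1 //.
exact: (leq_bigmax_cond (F := fun K => #|clique_nbhd K|) _ KMC).
Qed.

Lemma cliques_of_sub_clique_nbhd K u :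
  K \in MC -> u \in K -> cl u \subset K |: clique_nbhd K.
Proof.
move=> KMC uK; apply/subsetP => K'.
rewrite in_cliques_of in_setU1 => /andP[K'MC uK'].
have [//|neq] := eqVneq K' K; rewrite inE K'MC neq /=.
by apply/set0Pn; exists u; rewrite inE uK uK'.
Qed.

Lemma cideg_leq_cdeg : cideg e <= (cdeg e).+1.
Proof.
apply/bigmax_leqP => v _.
have [->|[K]] := set_0Vmem (cl v); first by rewrite cards0.
rewrite in_cliques_of => /andP[KMC vK].
apply: leq_trans (card_clique_nbhd_setU1 KMC).
exact/subset_leq_card/cliques_of_sub_clique_nbhd.
Qed.

Lemma omega_tilde_leq_exp_cdeg : omega_tilde e <= 2 ^ (cdeg e).+1.
Proof.
rewrite omega_tildeE; apply/bigmax_leqP => K KMC; rewrite card_cclass_imset.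
apply: leq_trans (_ : #|powerset (K |: clique_nbhd K)| <= _).
  apply/subset_leq_card/subsetP => _ /imsetP[u uK ->].
  by rewrite powersetE cliques_of_sub_clique_nbhd.
by rewrite card_powerset leq_pexp2l // card_clique_nbhd_setU1.
Qed.

Lemma cdeg_leq_omega_cideg : cdeg e <= omega_tilde e * cideg e.
Proof.
apply/bigmax_leqP => K KMC.
apply: leq_trans (_ : #|\bigcup_(X in cl @: K) X| <= _).
  apply/subset_leq_card/subsetP => K'; rewrite inE => /and3P[K'MC _ /set0Pn[u]].
  rewrite inE => /andP[uK' uK]; apply/bigcupP; exists (cl u).
    exact: imset_f.
  by rewrite in_cliques_of K'MC.
apply: leq_trans (card_bigcup_leq (m := cideg e) _) _.
  by move=> _ /imsetP[u _ ->]; apply: (leq_bigmax (F := fun v => #|cl v|)).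
by rewrite leq_mul2r -card_cclass_imset card_cclass_maxclique ?orbT.
Qed.

Lemma theta_star_leq_cideg : theta_star e <= cideg e.
Proof.
apply/bigmax_leqP => v _.
apply: leq_trans (leq_bigmax (F := fun v => #|cl v|) v).
have := bigmin_le_cond #|N v| (fun P : {set {set T}} => #|P|); apply.
apply/andP; split.
  apply/forall_inP => K Kv; rewrite maxclique_sub_closed_nbhd // andbT.
  by move: Kv; rewrite in_cliques_of => /andP[/maxclique_clique].
by apply/eqP/setP => u; apply/bigcupP/closed_nbhdP.
Qed.

Lemma alpha_star_leq_theta_star : alpha_star e <= theta_star e.
Proof.
apply/bigmax_leqP => v _; apply: leq_trans (alpha_in_leq_theta_in _ _) _.
exact: (leq_bigmax (F := fun v => theta_in e (N v))).
Qed.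

Lemma card_nbhd_classes_lt v :
  #|cc @: N v| < 2 ^ ((omega_tilde e).+1 + (alpha_star e).+1).
Proof.
rewrite ltnNge; apply/negP => large.
have [R RN [ccR_inj cardR]] := imset_transversal cc (N v).
rewrite -cardR in large.
have [[B [BR cardB cliqB]]|[B [BR cardB indB]]] := ramsey esym eirr large.
  have [K KMC BK] := clique_maxclique_sup cliqB.
  have := leq_trans (subset_leq_card (imsetS cc BK)) (card_cclass_maxclique KMC).
  rewrite card_in_imset ?cardB ?ltnn //.
  by apply: sub_in2 ccR_inj; apply/subsetP.
have : #|B| <= alpha_star e.
  apply: leq_trans (leq_bigmax (F := fun v => alpha_in e (N v)) v).
  apply: (leq_bigmax_cond (F := fun S : {set T} => #|S|)).
  by rewrite indB (subset_trans BR RN).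
by rewrite cardB ltnn.
Qed.

Lemma nbhd_classes_leq_cdeg : nbhd_classes <= (cdeg e).+1 * 2 ^ (cdeg e).+1.
Proof.
apply: leq_trans nbhd_classes_leq_cideg_omega _.
by rewrite leq_mul ?cideg_leq_cdeg ?omega_tilde_leq_exp_cdeg.
Qed.

Lemma cdeg_leq_nbhd_classes : cdeg e <= nbhd_classes * 2 ^ nbhd_classes.
Proof.
apply: leq_trans cdeg_leq_omega_cideg _.
by rewrite leq_mul ?omega_tilde_leq_nbhd_classes ?cideg_leq_exp_nbhd_classes.
Qed.

Lemma cideg_omega_leq_exp_nbhd_classes :
  maxn (cideg e) (omega_tilde e) <= 2 ^ nbhd_classes.
Proof.
rewrite geq_max cideg_leq_exp_nbhd_classes /=.
exact: leq_trans omega_tilde_leq_nbhd_classes (ltnW (ltn_expl _ _)).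
Qed.

Lemma nbhd_classes_leq_cideg_omega_sq :
  nbhd_classes <= maxn (cideg e) (omega_tilde e) ^ 2.
Proof.
apply: leq_trans nbhd_classes_leq_cideg_omega _.
by rewrite leq_mul ?leq_maxl ?leq_maxr.
Qed.

Lemma theta_omega_leq_cideg_omega :
  maxn (theta_star e) (omega_tilde e) <= maxn (cideg e) (omega_tilde e).
Proof.
by rewrite geq_max leq_maxr (leq_trans theta_star_leq_cideg) ?leq_maxl.
Qed.

Lemma alpha_omega_leq_theta_omega :
  maxn (alpha_star e) (omega_tilde e) <= maxn (theta_star e) (omega_tilde e).
Proof.
by rewrite geq_max leq_maxr (leq_trans alpha_star_leq_theta_star) ?leq_maxl.
Qed.

Lemma nbhd_classes_leq_exp_alpha_omega :
  nbhd_classes <= 4 ^ (maxn (alpha_star e) (omega_tilde e)).+1.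
Proof.
apply/bigmax_leqP => v _; apply: ltnW (leq_trans (card_nbhd_classes_lt v) _).
rewrite -[4]/(2 ^ 2) -expnM leq_pexp2l //; lia.
Qed.

End CliqueQuotient.

Definition nbhd_classes_param : graph_param := fun T e => nbhd_classes e.

Lemma cor54_params_equiv_nbhd_classes p : List.In p cor54_params ->
  param_bounded_by p nbhd_classes_param /\ param_bounded_by nbhd_classes_param p.
Proof.
case=> [<-|[<-|[<-|[<-|[<-|[]]]]]]; split.
- by exists succn => T e _ _; apply: nbhd_classes_leq_Delta_tilde.
- by exists id => T e esym _; apply: Delta_tilde_leq_nbhd_classes esym.
- exists (fun n => n.+1 * 2 ^ n.+1) => T e esym _.
  exact: nbhd_classes_leq_cdeg esym.
- exists (fun n => n * 2 ^ n) => T e esym _.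
  exact: cdeg_leq_nbhd_classes esym.
- exists (fun n => n ^ 2) => T e esym _.
  exact: nbhd_classes_leq_cideg_omega_sq esym.
- exists (fun n => 2 ^ n) => T e esym _.
  exact: cideg_omega_leq_exp_nbhd_classes esym.
- exists (fun n => 4 ^ n.+1) => T e esym eirr.
  exact: nbhd_classes_leq_exp_alpha_omega esym eirr.
- exists (fun n => 2 ^ n) => T e esym _ /=.
  apply: leq_trans (alpha_omega_leq_theta_omega e) _.
  apply: leq_trans (theta_omega_leq_cideg_omega esym) _.
  exact: cideg_omega_leq_exp_nbhd_classes esym.
- exists (fun n => 4 ^ n.+1) => T e esym eirr /=.
  apply: leq_trans (nbhd_classes_leq_exp_alpha_omega esym eirr) _.
  by rewrite leq_pexp2l // ltnS alpha_omega_leq_theta_omega.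
- exists (fun n => 2 ^ n) => T e esym _ /=.
  apply: leq_trans (theta_omega_leq_cideg_omega esym) _.
  exact: cideg_omega_leq_exp_nbhd_classes esym.
Qed.

Theorem corollary5p4 :
  forall p q : graph_param,
    List.In p cor54_params -> List.In q cor54_params ->
    param_bounded_by p q.
Proof.
move=> p q /cor54_params_equiv_nbhd_classes[p_hub _].
move=> /cor54_params_equiv_nbhd_classes[_ hub_q].
exact: param_bounded_by_trans p_hub hub_q.
Qed.
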